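(* Let $W$ be a nonnegative, integer-valued random variable with $\mathbb{P}(W=0)=p$. If $W$ has increasing failure rate (IFR), then $$d_{TV}(\mathcal{L}(W),\mathrm{Geom}(p))\leq 1-p(1+\mathbb{E}W).$$
   Context: The failure rate of $W$ is $r_W(j)=\mathbb{P}(W=j)/\mathbb{P}(W>j)$, $j\in\{0,1,2,\ldots\}$; $W$ is IFR if $r_W(j)$ is nondecreasing in $j$. $\mathrm{Geom}(p)$ is the distribution with mass $p(1-p)^k$ at $k=0,1,2,\ldots$. $d_{TV}(\mathcal{L}(U),\mathcal{L}(V))=\sup_{A\subseteq\{0,1,2,\ldots\}}|\mathbb{P}(U\in A)-\mathbb{P}(V\in A)|$. *)

(* The law of a nonnegative integer-valued random
   variable is represented by its probability mass function f : nat -> R. *)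
From HB Require Import structures.
From mathcomp Require Import all_boot all_order all_algebra.
From mathcomp Require Import all_classical all_reals all_analysis.
Set Implicit Arguments. Unset Strict Implicit. Unset Printing Implicit Defensive.
Import Order.TTheory GRing.Theory Num.Theory.
Local Open Scope classical_set_scope.
Local Open Scope ring_scope.
Local Open Scope ereal_scope.

Section Defs.
Variable R : realType.

Definition is_pmf (f : nat -> R) : Prop :=
  (forall k, (0 <= f k)%R) /\ \esum_(k in [set: nat]) (f k)%:E = 1.

Definition probA (f : nat -> R) (A : set nat) : \bar R :=
  \esum_(k in A) (f k)%:E.

Definition expect (f : nat -> R) : \bar R :=
  \esum_(k in [set: nat]) ((k%:R * f k)%R)%:E.

Definition tailP (f : nat -> R) (j : nat) : \bar R :=
  probA f [set k | (j < k)%N].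

(* failure rate r_W(j) = P(W=j)/P(W>j), with the convention x/0 = +oo *)
Definition failure_rate (f : nat -> R) (j : nat) : \bar R :=
  if tailP f j == 0 then +oo else ((f j / fine (tailP f j))%R)%:E.

Definition IFR (f : nat -> R) : Prop :=
  forall i j : nat, (i <= j)%N -> failure_rate f i <= failure_rate f j.

Definition geom_pmf (p : R) (k : nat) : R := (p * (1 - p) ^+ k)%R.

Definition dTV (f g : nat -> R) : \bar R :=
  ereal_sup [set `|probA f A - probA g A| | A in [set: set nat]].

End Defs.

(** With [p = P(W = 0)] and [S n = P(W >= n)], monotonicity of the failure
   rate between [0] and [j] gives the hazard bound [p * S j <= P(W = j)], and
   iterating [S (j+1) = S j - P(W = j)] gives [S j <= (1 - p)^j], so that
   [p * S j <= P(Geom(p) = j)] as well.  Hence [m j := p * S j] is a common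
   lower bound of both mass functions, and for every [A],
   [|P(W in A) - Geom(p)(A)| <= 1 - sum_j m j].  Finally
   [sum_j S j = 1 + E W] by the tail-sum formula (only [>=] is needed). *)
From HB Require Import structures.
From mathcomp Require Import all_boot all_order all_algebra.
From mathcomp Require Import all_classical all_reals all_analysis.
From mathcomp Require Import ring lra.
Set Implicit Arguments. Unset Strict Implicit.
Import Order.TTheory GRing.Theory Num.Theory.
Local Open Scope classical_set_scope.
Local Open Scope ring_scope.
Local Open Scope ereal_scope.

Lemma nneseries_le_ub (R : realType) (u : nat -> \bar R) (c : \bar R) :
  (forall k, 0 <= u k) -> (forall n, \sum_(0 <= k < n) u k <= c) ->
  \sum_(k <oo) u k <= c.
Proof.
move=> u_ge0 ub; apply: lime_le; last exact: nearW.
exact: is_cvg_nneseries.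
Qed.

Lemma probA_nneseries (R : realType) (u : nat -> R) (A : set nat) :
  (forall k, (0 <= u k)%R) -> probA u A = \sum_(k <oo | k \in A) (u k)%:E.
Proof.
move=> u_ge0; rewrite nneseries_esum ?set_mem_set // => k _.
by rewrite lee_fin.
Qed.

Lemma nneseries_common_lb (R : realType) (u v m : nat -> R) (P : pred nat) :
  (forall k, (0 <= m k)%R) -> (forall k, (m k <= u k)%R) ->
  (forall k, (m k <= v k)%R) ->
  \sum_(k <oo | P k) (u k)%:E + \sum_(k <oo) (m k)%:E
    <= \sum_(k <oo | P k) (v k)%:E + \sum_(k <oo) (u k)%:E.
Proof.
move=> m_ge0 mu mv.
have split_series (w z : nat -> R) : (forall k, (0 <= w k)%R) ->
    (forall k, (0 <= z k)%R) ->
    \sum_(k <oo | P k) (w k)%:E + \sum_(k <oo) (z k)%:E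
      = \sum_(k <oo) ((if P k then w k else 0) + z k)%R%:E.
  move=> w_ge0 z_ge0; rewrite eseries_mkcond -nneseriesD.
  - by apply: eq_eseriesr => k _; case: (P k); rewrite EFinD.
  - by move=> k _ _; case: (P k); rewrite // lee_fin.
  - by move=> k _ _; rewrite lee_fin.
have u_ge0 k : (0 <= u k)%R by rewrite (le_trans (m_ge0 k)).
have v_ge0 k : (0 <= v k)%R by rewrite (le_trans (m_ge0 k)).
rewrite !split_series //; apply: lee_nneseries => [k _ _ | k _].
  by rewrite lee_fin addr_ge0 //; case: (P k).
by rewrite lee_fin; case: (P k); have := mu k; have := mv k; lra.
Qed.

Lemma lee_abse_sub (R : realType) (x y q : \bar R) (c : R) :
  x \is a fin_num -> 0 <= y -> 0 <= q ->
  x + q <= y + c%:E -> y + q <= x + c%:E -> `|x - y| <= c%:E - q.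
Proof.
move=> x_fin y_ge0 q_ge0 xy yx.
have yq_fin : y + q \is a fin_num.
  rewrite ge0_fin_numE ?adde_ge0 // (le_lt_trans yx) //.
  by rewrite -(fineK x_fin) -EFinD ltey.
have [y_fin q_fin] : y \is a fin_num /\ q \is a fin_num.
  by apply/andP; rewrite -fin_numD.
move: xy yx; rewrite -(fineK x_fin) -(fineK y_fin) -(fineK q_fin).
rewrite -!EFinD abse_EFin !lee_fin ler_norml => xy yx.
by apply/andP; split; lra.
Qed.

Lemma geom_pmf_ge0 (R : realType) (p : R) k :
  (0 <= p <= 1)%R -> (0 <= geom_pmf p k)%R.
Proof. by case/andP=> p_ge0 p_le1; rewrite mulr_ge0 ?exprn_ge0 ?subr_ge0. Qed.

Lemma geom_series_le1 (R : realType) (p : R) :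
  (0 <= p <= 1)%R -> \sum_(k <oo) (geom_pmf p k)%:E <= 1.
Proof.
move=> p01; apply: nneseries_le_ub => [k | n]; first by rewrite lee_fin geom_pmf_ge0.
have partial_sum : (\sum_(0 <= k < n) geom_pmf p k = 1 - (1 - p) ^+ n)%R.
  elim: n => [|n IH]; first by rewrite big_geq // expr0 subrr.
  by rewrite big_nat_recr //= IH /geom_pmf exprS; ring.
case/andP: p01 => _ p_le1.
by rewrite sumEFin partial_sum lee_fin lerBlDr lerDl exprn_ge0 // subr_ge0.
Qed.

Definition survival {R : realType} (f : nat -> R) (n : nat) : R :=
  (1 - \sum_(0 <= k < n) f k)%R.

Section pmf.
Variable R : realType.
Variable f : nat -> R.
Hypothesis f_ge0 : forall k, (0 <= f k)%R.
Hypothesis f_esum1 : \esum_(k in [set: nat]) (f k)%:E = 1.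

Lemma pmf_series1 : \sum_(k <oo) (f k)%:E = 1.
Proof. by rewrite nneseries_esumT // => n; rewrite lee_fin. Qed.

Lemma pmf_partial_le1 n : (\sum_(0 <= k < n) f k <= 1)%R.
Proof.
rewrite -lee_fin -pmf_series1 -sumEFin.
by apply: nneseries_lim_ge => k _ _; rewrite lee_fin.
Qed.

Lemma pmf_series_cond_fin_num (P : pred nat) :
  \sum_(k <oo | P k) (f k)%:E \is a fin_num.
Proof.
rewrite ge0_fin_numE; last by apply: nneseries_ge0 => k _ _; rewrite lee_fin.
apply: le_lt_trans (ltry 1); rewrite -pmf_series1 eseries_mkcond.
by apply: lee_nneseries => k _; case: (P k); rewrite // lee_fin.
Qed.

Lemma survival0 : survival f 0 = 1%R.
Proof. by rewrite /survival big_geq // subr0. Qed.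

Lemma survival1 : survival f 1 = (1 - f 0%N)%R.
Proof. by rewrite /survival big_nat1. Qed.

Lemma survivalS n : survival f n.+1 = (survival f n - f n)%R.
Proof. by rewrite /survival big_nat_recr //= opprD addrA. Qed.

Lemma survival_ge0 n : (0 <= survival f n)%R.
Proof. by rewrite subr_ge0 pmf_partial_le1. Qed.

Lemma tailPE j : tailP f j = (survival f j.+1)%:E.
Proof.
have split1 := pmf_series1.
rewrite (nneseries_split 0 j.+1) ?add0n in split1; last by move=> k _; rewrite lee_fin.
rewrite eseries_cond in split1.
rewrite /tailP /probA -nneseries_esum; last by move=> k _; rewrite lee_fin.
rewrite /survival EFinB -split1 -sumEFin addeAC subee ?add0e //.
by rewrite sumEFin.
Qed.

Lemma failure_rateE j : failure_rate f j =
  if survival f j.+1 == 0%R then +oo else (f j / survival f j.+1)%:E.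
Proof. by rewrite /failure_rate tailPE eqe. Qed.

Lemma IFR_hazard_lb : IFR f -> forall j, (f 0%N * survival f j <= f j)%R.
Proof.
move=> ifr j; have := ifr 0%N j isT; rewrite !failure_rateE survival1.
have := survivalS j; have := pmf_partial_le1 1; rewrite big_nat1.
have := f_ge0 0%N; have := f_ge0 j; have := survival_ge0 j.+1.
have [-> | Sj_neq0] := eqVneq (survival f j.+1) 0%R; first by nra.
case: eqP => [_ _ _ _ _ _ | /eqP p_neq1]; first by rewrite leye_eq.
move=> Sj_ge0 fj_ge0 p_ge0 p_le1 SS; rewrite lee_fin.
have Sj_gt0 : (0 < survival f j.+1)%R by rewrite lt0r Sj_neq0.
have p_lt1 : (0 < 1 - f 0%N)%R by rewrite lt0r p_neq1 subr_ge0.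
by rewrite ler_pdivrMr // mulrAC ler_pdivlMr //; nra.
Qed.

Lemma IFR_survival_le_geom : IFR f -> forall j,
  (survival f j <= (1 - f 0%N) ^+ j)%R.
Proof.
move=> ifr; elim=> [|j IH]; first by rewrite survival0 expr0.
have := IFR_hazard_lb ifr j; have := survival_ge0 j.
have := pmf_partial_le1 1; rewrite big_nat1 survivalS exprS => Sj_ge0 p_le1 hz.
apply: (le_trans (y := (1 - f 0%N) * survival f j)%R); first by nra.
by rewrite ler_wpM2l // subr_ge0.
Qed.

Lemma sum_survival n :
  (\sum_(0 <= k < n) (f k + k%:R * f k) + n%:R * survival f n
    = \sum_(0 <= k < n) survival f k)%R.
Proof.
elim: n => [|n IH]; first by rewrite !big_geq // mul0r addr0.
by rewrite !big_nat_recr //= -IH survivalS -natr1; ring.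
Qed.

Lemma expect_le_series_survival :
  1 + expect f <= \sum_(k <oo) (survival f k)%:E.
Proof.
have mean_ge0 k : (0 <= k%:R * f k)%R by rewrite mulr_ge0.
rewrite /expect -nneseries_esumT; last by move=> k; rewrite lee_fin.
rewrite -pmf_series1 -nneseriesD; [|by move=> k _ _; rewrite lee_fin..].
apply: nneseries_le_ub => [k | n]; first by rewrite lee_fin addr_ge0.
rewrite sumEFin; apply: le_trans (nneseries_lim_ge n _); last first.
  by move=> k _ _; rewrite lee_fin survival_ge0.
by rewrite sumEFin lee_fin -sum_survival lerDl mulr_ge0 ?survival_ge0.
Qed.

End pmf.

Theorem corollary2p1 (R : realType) (f : nat -> R) (p : R) :
  is_pmf f -> f 0%N = p -> IFR f ->
  dTV f (geom_pmf p) <= 1 - p%:E * (1 + expect f).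
Proof.
move=> [f_ge0 f_esum1] <- ifr.
have p01 : (0 <= f 0%N <= 1)%R.
  by rewrite f_ge0 -subr_ge0 -survival1 (survival_ge0 f_ge0 f_esum1).
set m := fun k => (f 0%N * survival f k)%R.
have m_ge0 k : (0 <= m k)%R by rewrite mulr_ge0 ?f_ge0 ?(survival_ge0 f_ge0 f_esum1).
have m_le_f k : (m k <= f k)%R by apply: IFR_hazard_lb.
have m_le_geom k : (m k <= geom_pmf (f 0%N) k)%R.
  by rewrite ler_wpM2l ?f_ge0 ?(IFR_survival_le_geom f_ge0 f_esum1).
have mass_le : (f 0%N)%:E * (1 + expect f) <= \sum_(k <oo) (m k)%:E.
  under eq_eseriesr do rewrite EFinM.
  rewrite nneseriesZl => [|k _]; last by rewrite lee_fin survival_ge0.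
  by rewrite lee_wpmul2l ?lee_fin ?f_ge0 ?expect_le_series_survival.
apply: ge_ereal_sup => _ [A _ <-].
rewrite !probA_nneseries // => [|k]; last exact: geom_pmf_ge0.
apply: lee_abse_sub.
- exact: pmf_series_cond_fin_num.
- by apply: nneseries_ge0 => k _ _; rewrite lee_fin geom_pmf_ge0.
- rewrite mule_ge0 ?lee_fin ?f_ge0 // adde_ge0 //.
  by apply: esum_ge0 => k _; rewrite lee_fin mulr_ge0.
- rewrite -[X in _ <= _ + X](pmf_series1 f_ge0 f_esum1).
  exact: le_trans (leeD2l _ mass_le) (nneseries_common_lb _ m_ge0 m_le_f m_le_geom).
- apply: le_trans (leeD2l _ mass_le) _.
  apply: le_trans (nneseries_common_lb _ m_ge0 m_le_geom m_le_f) _.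
  exact: leeD (lexx _) (geom_series_le1 p01).
Qed.
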